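(* Let $G=(V,E)$ be a graph on $V=\{v_1,\dots,v_N\}$ ($N\ge 3$) with edge weights $w:E\to\mathbb{R}$, and let $\pi^\star=(v_1,\dots,v_N)$ be the ground-truth order, whose ''true edges'' are $(v_k,v_{k+1})$, $1\le k\le N-1$. Assume: (A1) for every internal vertex $v_i$ ($2\le i\le N-1$), its two true incident edges $e_i^-=(v_{i-1},v_i)$ and $e_i^+=(v_i,v_{i+1})$ belong to $E$ and have maximum weight among all edges of $E$ incident to $v_i$; (A2) there exists $\Delta>0$ such that for every internal vertex $v_i$ and every non-true edge $(v_i,u)\in E$, $w(e_i^-)\ge w(v_i,u)+\Delta$ and $w(e_i^+)\ge w(v_i,u)+\Delta$. Let $C=(v_i,v_{i+1},\dots,v_j)$ with $1\le i<j\le N$ be a contiguous substring of $\pi^\star$, and call an edge ''used'' if it is one of $(v_k,v_{k+1})$ with $i\le k<j$ and ''unused'' otherwise. Then: if $i\ge 2$, among the unused edges of $E$ incident to $v_i$ the heaviest is uniquely the true boundary edge $(v_{i-1},v_i)$; and if $j\le N-1$, among the unused edges of $E$ incident to $v_j$ the heaviest is uniquely the true boundary edge $(v_j,v_{j+1})$.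
   Context: A ''contiguous substring'' of $\pi^\star$ is a chain $(v_i,\dots,v_j)$ of consecutive vertices in the true order; its internal edges are the used edges. A non-true edge is any edge of $E$ not of the form $(v_k,v_{k+1})$. *)

(* Vertices v_1..v_N are encoded as 'I_N (0-based):
   vertex v_{k+1} is the ordinal with value k. *)
From mathcomp Require Import all_boot all_order all_algebra.
Set Implicit Arguments. Unset Strict Implicit. Unset Printing Implicit Defensive.
Import Order.TTheory GRing.Theory Num.Theory.

Definition true_edge (N : nat) (a b : 'I_N) : bool :=
  (a.+1 == b :> nat) || (b.+1 == a :> nat).

Definition used_edge (N : nat) (i j a b : 'I_N) : bool :=
  [exists k : 'I_N, (i <= k < j) &&
     (((a == k :> nat) && (b == k.+1 :> nat)) ||
      ((b == k :> nat) && (a == k.+1 :> nat)))].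

(* At an endpoint of C the only true edges are the boundary edge and the used
   edge of C, so any other unused edge there is non-true, and (A2) makes it
   lighter than the boundary edge by at least Delta > 0. *)
From mathcomp Require Import all_boot all_order all_algebra.
From mathcomp Require Import zify.
Set Implicit Arguments. Unset Strict Implicit. Unset Printing Implicit Defensive.
Import Order.TTheory GRing.Theory Num.Theory.
Local Open Scope ring_scope.

Section UsedEdges.

Variables (N : nat) (i j : 'I_N).

Lemma used_edgeC (a b : 'I_N) : used_edge i j a b = used_edge i j b a.
Proof. by apply: eq_existsb => k; rewrite orbC. Qed.

Lemma used_edge_succ (a b : 'I_N) :
  (i <= a < j)%N -> a.+1 = b :> nat -> used_edge i j a b.
Proof. by move=> iaj ab; apply/existsP; exists a; rewrite iaj ab !eqxx. Qed.

Lemma used_edge_in_range (a b : 'I_N) :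
  used_edge i j a b -> (i <= a <= j)%N && (i <= b <= j)%N.
Proof.
by case/existsP => k /andP[/andP[ik kj] /orP[]/andP[/eqP-> /eqP->]]; lia.
Qed.

Lemma unused_edge_pred_left (im : 'I_N) : im.+1 = i :> nat -> ~~ used_edge i j im i.
Proof. by move=> him; apply/negP => /used_edge_in_range; lia. Qed.

Lemma unused_edge_succ_right (jp : 'I_N) : j.+1 = jp :> nat -> ~~ used_edge i j j jp.
Proof. by move=> hjp; apply/negP => /used_edge_in_range; lia. Qed.

Lemma unused_true_edge_left (im u : 'I_N) : (i < j)%N -> im.+1 = i :> nat ->
  true_edge i u -> ~~ used_edge i j i u -> u = im.
Proof.
move=> ij him /orP[]/eqP iu unused; last by apply: val_inj => /=; lia.
by case/negP: unused; apply: used_edge_succ; rewrite ?leqnn.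
Qed.

Lemma unused_true_edge_right (jp u : 'I_N) : (i < j)%N -> j.+1 = jp :> nat ->
  true_edge j u -> ~~ used_edge i j j u -> u = jp.
Proof.
move=> ij hjp /orP[]/eqP ju unused; first by apply: val_inj => /=; lia.
by case/negP: unused; rewrite used_edgeC; apply: used_edge_succ => //; lia.
Qed.

End UsedEdges.

Section HeaviestEdges.

Variables (R : realFieldType) (N : nat) (E : rel 'I_N) (w : 'I_N -> 'I_N -> R).

Hypothesis A1 : forall vm v vp : 'I_N, vm.+1 = v :> nat -> v.+1 = vp :> nat ->
  [/\ E vm v, E v vp &
      forall u : 'I_N, E v u -> w v u <= w vm v /\ w v u <= w v vp].

Variable Delta : R.
Hypothesis Delta_gt0 : 0 < Delta.
Hypothesis A2 : forall vm v vp : 'I_N, vm.+1 = v :> nat -> v.+1 = vp :> nat ->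
  forall u : 'I_N, E v u -> ~~ true_edge v u ->
    w v u + Delta <= w vm v /\ w v u + Delta <= w v vp.

Lemma pred_edge_heaviest (vm v : 'I_N) : vm.+1 = v :> nat -> (v.+1 < N)%N ->
  E vm v /\ forall u, E v u -> ~~ true_edge v u -> w v u < w vm v.
Proof.
move=> hvm vN; have [Evm _ _] := A1 (vp := Ordinal vN) hvm erefl.
split=> // u Eu nt; have [le_vm _] := A2 (vp := Ordinal vN) hvm erefl Eu nt.
by apply: lt_le_trans le_vm; rewrite ltrDl.
Qed.

Lemma succ_edge_heaviest (v vp : 'I_N) : (0 < v)%N -> v.+1 = vp :> nat ->
  E v vp /\ forall u, E v u -> ~~ true_edge v u -> w v u < w v vp.
Proof.
move=> v_gt0 hvp; have vm_lt : (v.-1 < N)%N by rewrite ltnW ?prednK ?ltn_ord.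
have hvm : (Ordinal vm_lt).+1 = v :> nat by rewrite /= prednK.
have [_ Evp _] := A1 hvm hvp.
split=> // u Eu nt; have [_ le_vp] := A2 hvm hvp Eu nt.
by apply: lt_le_trans le_vp; rewrite ltrDl.
Qed.

End HeaviestEdges.

Theorem mainTheorem2 (R : realFieldType) (N : nat) (E : rel 'I_N)
  (w : 'I_N -> 'I_N -> R)
  (HN : (3 <= N)%N)
  (Esym : symmetric E)
  (wsym : forall x y, w x y = w y x)
  (A1 : forall vm v vp : 'I_N, vm.+1 = v :> nat -> v.+1 = vp :> nat ->
        [/\ E vm v, E v vp &
            forall u : 'I_N, E v u -> w v u <= w vm v /\ w v u <= w v vp])
  (A2 : exists2 Delta : R, 0 < Delta &
        forall vm v vp : 'I_N, vm.+1 = v :> nat -> v.+1 = vp :> nat ->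
        forall u : 'I_N, E v u -> ~~ true_edge v u ->
          w v u + Delta <= w vm v /\ w v u + Delta <= w v vp) :
  forall i j : 'I_N, (i < j)%N ->
    (forall im : 'I_N, im.+1 = i :> nat ->
       E im i /\ ~~ used_edge i j im i /\
       forall u : 'I_N, E i u -> ~~ used_edge i j i u -> u != im ->
         w i u < w im i)
    /\
    (forall jp : 'I_N, j.+1 = jp :> nat ->
       E j jp /\ ~~ used_edge i j j jp /\
       forall u : 'I_N, E j u -> ~~ used_edge i j j u -> u != jp ->
         w j u < w j jp).
Proof.
case: A2 => Delta Delta_gt0 A2 i j ij; split.
- move=> im him.
  have [Eim lighter] :=
    pred_edge_heaviest A1 Delta_gt0 A2 him (leq_ltn_trans ij (ltn_ord j)).
  split=> //; split; first exact: unused_edge_pred_left.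
  move=> u Eu unused u_neq; apply: lighter Eu _.
  by apply: contraNN u_neq => tr; apply/eqP; apply: unused_true_edge_left tr unused.
- move=> jp hjp.
  have [Ejp lighter] :=
    succ_edge_heaviest A1 Delta_gt0 A2 (leq_ltn_trans (leq0n i) ij) hjp.
  split=> //; split; first exact: unused_edge_succ_right.
  move=> u Eu unused u_neq; apply: lighter Eu _.
  by apply: contraNN u_neq => tr; apply/eqP; apply: unused_true_edge_right tr unused.
Qed.
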